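(* Let $(a,b)\in\mathbb N^2$ be coprime and $k\ge1$ an integer. (1) If $(d_1,d_2)=(kab+1,kb^2)$ or $(d_1,d_2)=(ka^2,kab+1)$, then $(d_1,d_2)$ and $(ka,kb)$ satisfy the one-bending property. (2) Let $(d_1,d_2)\in\mathbb N^2$ with $d_1b-d_2a\ne0$ and put $m=|d_1b-d_2a|$. If $d_1\ge mka$ in the case $d_1b-d_2a<0$, or $d_2\ge mkb$ in the case $d_1b-d_2a>0$, then $(d_1,d_2)$ and $(ka,kb)$ satisfy the one-bending property. (3) For every integer $m>0$ there exist infinitely many $(d_1,d_2)\in\mathbb N^2$ such that $m=|d_1b-d_2a|$ and $(d_1,d_2)$ and $(ka,kb)$ satisfy the one-bending property.
   Context: Rank-2 scattering diagram: $\Bbbk$ a field of characteristic $0$, $M=\mathbb Z^2$ with basis $e_1,e_2$, $N=\operatorname{Hom}(M,\mathbb Z)$; positive integers $\ell_1,\ell_2$; independent variables $p_{i,k}$ ($i=1,2$, $1\le k\le\ell_i$); $\mathcal M$ their monoid of monomials; $\widehat R$ the completion of $\Bbbk[\mathcal M][x^{\pm1},y^{\pm1}]$ at the ideal generated by the $p_{i,k}$; $x^{(m_1,m_2)}=x^{m_1}y^{m_2}$. Walls: rays $b-\mathbb R_{\ge0}m_0$ or lines $b-\mathbb Rm_0$ ($m_0$ primitive) with functions $1+\sum_{k\ge1}c_kx^{km_0}$, $c_k$ in that ideal; crossing with velocity $v$ acts by $x^m\mapsto x^mf^{\langle n,m\rangle}$ ($n\in N$ primitive orthogonal to the wall, $\langle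 n,v\rangle<0$); consistency: trivial path-ordered products around regular loops. $\mathfrak D=\operatorname{Scat}(P_1,P_2)$, $P_1=1+\sum_{k=1}^{\ell_1}p_{1,k}x^k$, $P_2=1+\sum_{k=1}^{\ell_2}p_{2,k}y^k$: the consistent diagram (unique up to equivalence) made of the lines $(\mathbb Re_1,P_1)$, $(\mathbb Re_2,P_2)$ and rays, chosen with rays $\mathbb R_{\le0}(a,b)$ for distinct coprime $(a,b)\in\mathbb Z_{>0}^2$. A broken line for $m_0\in M\setminus\{0\}$ with endpoint $Q$ is a continuous piecewise linear $\beta:(-\infty,0]\to\mathbb R^2$ avoiding ray endpoints and wall intersections, with breakpoints $\tau_1<\dots<\tau_\ell<0$ and monomials $c_ix^{m_i}$ on linear pieces, $c_0=1$, $\beta(0)=Q$, $\dot\beta=-m_i$, transversal crossings at breakpoints, $c_ix^{m_i}$ a term other than $c_{i-1}x^{m_{i-1}}$ of $c_{i-1}x^{m_{i-1}}\prod_{\mathfrak d\ni\beta(\tau_i)}f_{\mathfrak d}^{\langle n,m_{i-1}\rangle}$ ($n$ primitive normal, $\langle n,m_{i-1}\rangle>0$); it bends at the $\beta(\tau_i)$; initial exponent $m_0$, final exponent $m_\ell$. One-bending property: for $(d_1,d_2)\in\mathbb N^2$, coprime $(a,b)\in\mathbb N^2$ with $d_1b-d_2a\ne0$, $k\ge1$, $(d_1,d_2)$ and $(ka,kb)$ satisfy it if every broken line in $\mathfrak D$ with initial exponent $(-d_1,-d_2)$, final exponent $(ka-d_1,kb-d_2)$ and no bend on the positive coordinate axes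 has exactly one bend. *)

From HB Require Import structures.
From mathcomp Require Import all_boot all_order all_algebra.
From mathcomp Require Import mpoly.
From mathcomp Require Import reals Rstruct.

Set Implicit Arguments.
Unset Strict Implicit.
Unset Printing Implicit Defensive.

Import Order.TTheory GRing.Theory Num.Theory.
Local Open Scope ring_scope.

Section ScatteringDiagram.
Variables (K : fieldType) (l1 l2 : nat).
Local Notation n := (l1 + l2)%N.

Definition PS := 'X_{1..n} -> K.
Definition ps0 : PS := fun _ => 0.
Definition ps1 : PS := fun e => (e == 0%MM)%:R.
Definition psmul (u v : PS) : PS := fun e =>
  \sum_(e1 : 'X_{1..n < (mdeg e).+1})
   \sum_(e2 : 'X_{1..n < (mdeg e).+1} | (bmnm e1 + bmnm e2 == e)%MM)
      u (bmnm e1) * v (bmnm e2).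

Definition PSz := nat -> PS.
Definition psz1 : PSz := fun j => if j == 0%N then ps1 else ps0.
Definition pszmul (F G : PSz) : PSz := fun j e =>
  \sum_(i < j.+1) psmul (F i) (G (j - i)%N) e.
Definition pszexp (F : PSz) (w : nat) : PSz := iter w (pszmul F) psz1.

Definition isP1 (e : 'X_{1..n}) (j : nat) : bool :=
  (1 <= j <= l1)%N && [exists i : 'I_n, (val i == j.-1) && (e == U_(i))%MM].
Definition isP2 (e : 'X_{1..n}) (j : nat) : bool :=
  (1 <= j <= l2)%N && [exists i : 'I_n, (val i == l1 + j.-1)%N && (e == U_(i))%MM].

Definition RayData := nat -> nat -> nat -> PS.

Inductive wall := WL1 | WL2 | WRay of nat & nat.

Definition valid_wall (W : wall) : bool :=
  if W is WRay a b then [&& (0 < a)%N, (0 < b)%N & coprime a b] else true.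

Definition wdir (W : wall) : nat * nat :=
  match W with WL1 => (1, 0)%N | WL2 => (0, 1)%N | WRay a b => (a, b) end.

Definition wfun (c : RayData) (W : wall) : PSz := fun j =>
  if j == 0%N then ps1 else
  match W with
  | WL1 => fun e => (isP1 e j)%:R
  | WL2 => fun e => (isP2 e j)%:R
  | WRay a b => c a b j
  end.

Definition wpair (W : wall) (m : int * int) : int :=
  match W with
  | WL1 => m.2
  | WL2 => m.1
  | WRay a b => b%:Z * m.1 - a%:Z * m.2
  end.

Definition T := {mpoly K[n + 2]}.
Definition Xp (i : 'I_n) : T := 'X_(lshift 2 i).
Definition Xx : T := 'X_(rshift n (0 : 'I_2)).
Definition Xy : T := 'X_(rshift n (1 : 'I_2)).
Definition pmon (e : 'X_{1..n}) : T := \prod_(i < n) Xp i ^+ e i.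
Definition trunc (N : nat) (u : PS) : T :=
  \sum_(e : 'X_{1..n < N}) u (bmnm e) *: pmon (bmnm e).

Definition twall (c : RayData) (N B : nat) (W : wall) : T :=
  1 + \sum_(1 <= j < B.+1)
        trunc N (wfun c W j) * (Xx ^+ (j * (wdir W).1) * Xy ^+ (j * (wdir W).2)).

Definition good_bound (c : RayData) (N B : nat) : Prop :=
  forall W j (e : 'X_{1..n}), valid_wall W -> (0 < j)%N -> (mdeg e < N)%N ->
    wfun c W j e != 0 ->
    [/\ (j <= B)%N, ((wdir W).1 <= B)%N & ((wdir W).2 <= B)%N].

Definition tinv (N : nat) (f : T) : T := \sum_(j < N) (1 - f) ^+ j.
Definition spow (N : nat) (f : T) (z : int) : T :=
  match z with Posz k => f ^+ k | Negz k => tinv N f ^+ k.+1 end.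

Definition cross_img (N : nat) (f : T) (nx ny : int) : (n + 2).-tuple T :=
  [tuple match split i with
         | inl j => Xp j
         | inr j => if val j == 0%N then Xx * spow N f nx else Xy * spow N f ny
         end | i < n + 2].

Definition cross (N : nat) (f : T) (nx ny : int) (G : T) : T :=
  comp_mpoly (cross_img N f nx ny) G.

Definition rays (B : nat) : seq (nat * nat) :=
  sort (fun p q : nat * nat => (p.2 * q.1 <= q.2 * p.1)%N)
    [seq (a, b) | a <- iota 1 B, b <- [seq b <- iota 1 B | coprime a b]].

Definition loop_walls (B : nat) : seq (wall * int * int) :=
  [:: (WL2, 1, 0); (WL1, 0, 1)] ++
  [seq (WRay ab.1 ab.2, - (ab.2%:Z), ab.1%:Z) | ab <- rays B] ++
  [:: (WL2, -1, 0); (WL1, 0, -1)].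

Definition path_prod (c : RayData) (N B : nat) (G : T) : T :=
  foldl (fun G w => cross N (twall c N B w.1.1) w.1.2 w.2 G) G (loop_walls B).

Definition congJ (N : nat) (G H : T) : Prop :=
  forall m : 'X_{1..n + 2},
    (\sum_(i < n) m (lshift 2 i) < N)%N -> G@_m = H@_m.

Definition is_scat (c : RayData) : Prop :=
  [/\ (forall a b k, (0 < k)%N -> c a b k 0%MM = 0),
      (forall N, exists B, good_bound c N B) &
      (forall N B, good_bound c N B ->
         congJ N (path_prod c N B Xx) Xx /\ congJ N (path_prod c N B Xy) Xy)].

Local Notation R := Rdefinitions.R.

Definition on_wall (W : wall) (P : R * R) : Prop :=
  match W with
  | WL1 => P.2 = 0
  | WL2 => P.1 = 0
  | WRay a b => exists t : R, 0 <= t /\ P = (- (t * a%:R), - (t * b%:R))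
  end.

Definition in_piece (tau : seq R) (i : nat) (t : R) : Prop :=
  [/\ t <= 0, (i = 0%N \/ nth 0 tau i.-1 <= t) & (i = size tau \/ t <= nth 0 tau i)].

Definition is_broken_line (c : RayData) (m0 : int * int) (Q : R * R)
    (tau : seq R) (ms : seq (int * int)) (cs : seq PS) (beta : R -> R * R) : Prop :=
  [/\ [/\ size ms = (size tau).+1, size cs = (size tau).+1,
         nth (0, 0) ms 0 = m0 & nth ps0 cs 0 = ps1],
      sorted (fun s t => s < t) tau /\ all (fun t => t < 0) tau,
      beta 0 = Q /\ (forall t, t <= 0 -> beta t <> (0, 0)),
      (forall i s t, (i <= size tau)%N -> in_piece tau i s -> in_piece tau i t ->
         let m := nth (0, 0) ms i in
         beta t = ((beta s).1 - (t - s) * m.1%:~R, (beta s).2 - (t - s) * m.2%:~R)) &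
      (forall i, (i < size tau)%N ->
         let m := nth (0, 0) ms i in
         let m' := nth (0, 0) ms i.+1 in
         exists W, [/\ valid_wall W, on_wall W (beta (nth 0 tau i)),
           (0 < `|wpair W m|)%N &
           exists j, [/\ (0 < j)%N,
             m' = (m.1 + (j * (wdir W).1)%:Z, m.2 + (j * (wdir W).2)%:Z),
             nth ps0 cs i.+1 = psmul (nth ps0 cs i) (pszexp (wfun c W) `|wpair W m| j) &
             exists e, nth ps0 cs i.+1 e != 0]])].

Definition on_pos_axis (P : R * R) : Prop :=
  (P.2 = 0 /\ 0 < P.1) \/ (P.1 = 0 /\ 0 < P.2).

Definition one_bending (c : RayData) (d1 d2 a b k : nat) : Prop :=
  forall Q tau ms cs beta,
    is_broken_line c (- (d1%:Z), - (d2%:Z)) Q tau ms cs beta ->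
    last (- (d1%:Z), - (d2%:Z)) ms = ((k * a)%:Z - d1%:Z, (k * b)%:Z - d2%:Z) ->
    (forall i, (i < size tau)%N -> ~ on_pos_axis (beta (nth 0 tau i))) ->
    size tau = 1%N.

End ScatteringDiagram.

From HB Require Import structures.
From mathcomp Require Import all_boot all_order all_algebra.
From mathcomp Require Import mpoly.
From mathcomp Require Import reals Rstruct.
From mathcomp Require Import zify ring lra.
From Stdlib Require Import ClassicalEpsilon.

Set Implicit Arguments.
Unset Strict Implicit.
Unset Printing Implicit Defensive.

Import Order.TTheory GRing.Theory Num.Theory.
Local Open Scope ring_scope.

(* Every bend of a broken line happens at a point [-t w] of a wall whose
   direction [w] lies in the closed first quadrant, and adds a positive
   multiple of [w] to the exponent.  Since the line travels along minus its
   current exponent, consecutive wall directions turn monotonically, in the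
   sense opposite to the exponent at the bend.  Suppose a broken line from
   [-(d1,d2)] to [(ka,kb)-(d1,d2)] bends at least twice.  Its total exponent
   change [(ka,kb)] has zero cross product with [(a,b)], and the monotone
   turning then forces the first wall direction [w] strictly between [(a,b)]
   and [(d1,d2)], with [w <= (ka,kb)] coordinatewise.  Each arithmetic
   condition of the corollary leaves no room for such a [w]. *)

Definition cross {R : pzRingType} (u v : R * R) : R := u.1 * v.2 - u.2 * v.1.

Definition natv (w : nat * nat) : int * int := (w.1%:Z, w.2%:Z).

(* The sign condition places [w] strictly inside the angle between [(a,b)] and [(d1,d2)]. *)
Definition wall_between (a b k d1 d2 : nat) (w : nat * nat) : Prop :=
  [/\ (w.1 <= k * a)%N, (w.2 <= k * b)%N &
      0 < cross (natv (a, b)) (natv w) * cross (natv w) (natv (d1, d2))].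

Lemma wall_between_swap a b k d1 d2 w :
  wall_between a b k d1 d2 w -> wall_between b a k d2 d1 (w.2, w.1).
Proof.
case: w => p q [le_p le_q between]; split=> //.
by rewrite /cross /= -mulrNN !opprB.
Qed.

Lemma quadrant_cross_trans (s : int) (e w w' : nat * nat) :
  s = 1 \/ s = -1 -> (0 < e.1 + e.2)%N ->
  0 < s * cross (natv w') (natv w) -> s * cross (natv e) (natv w) <= 0 ->
  s * cross (natv e) (natv w') < 0.
Proof. by case: e w w' => [? ?] [? ?] [? ?]; rewrite /cross /=; case=> ->; nia. Qed.

Section RotatingBends.

Variables (l : nat) (m : nat -> int * int) (w : nat -> nat * nat) (j : nat -> nat).

Hypothesis j_gt0 : forall i, (i < l)%N -> (0 < j i)%N.
Hypothesis m_step : forall i, (i < l)%N ->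
  m i.+1 = ((m i).1 + (j i * (w i).1)%N%:Z, (m i).2 + (j i * (w i).2)%N%:Z).
Hypothesis cross_m0 : cross (natv (w 0%N)) (m 0%N) != 0.
Hypothesis turn : forall i, (i.+1 < l)%N ->
  cross (natv (w i.+1)) (natv (w i)) * cross (natv (w i)) (m i) < 0 /\
  cross (natv (w i.+1)) (natv (w i)) * cross (natv (w i.+1)) (m i.+1) < 0.

Lemma m_monotone i i' : (i <= i' <= l)%N -> (m i).1 <= (m i').1 /\ (m i).2 <= (m i').2.
Proof.
elim: i' => [|i' IH] /andP [le_ii' le_i'l]; first by case: i le_ii'.
have [-> | ne_ii'] := eqVneq i i'.+1; first by [].
have [le1 le2] : (m i).1 <= (m i').1 /\ (m i).2 <= (m i').2.
  by apply: IH; lia.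
by rewrite m_step //=; split; lia.
Qed.

Lemma first_wall_le_total : (0 < l)%N ->
  (w 0%N).1%:Z <= (m l).1 - (m 0%N).1 /\ (w 0%N).2%:Z <= (m l).2 - (m 0%N).2.
Proof.
move=> l_gt0.
have [] : (m 1%N).1 <= (m l).1 /\ (m 1%N).2 <= (m l).2.
  by apply: m_monotone; rewrite l_gt0 leqnn.
have := j_gt0 l_gt0; rewrite m_step //=; nia.
Qed.

Lemma turn_orientation : exists2 s : int, s = 1 \/ s = -1 &
  (forall i, (i < l)%N -> s * cross (natv (w i)) (m i) < 0) /\
  (forall i, (i.+1 < l)%N -> 0 < s * cross (natv (w i.+1)) (natv (w i))).
Proof.
have [s s_sign g0_neg] :
    exists2 s : int, s = 1 \/ s = -1 & s * cross (natv (w 0%N)) (m 0%N) < 0.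
  have [g0_lt0 | g0_ge0] := ltrP (cross (natv (w 0%N)) (m 0%N)) 0.
  - by exists 1; [left | rewrite mul1r].
  - by exists (-1); [right | rewrite mulN1r oppr_lt0 lt_neqAle eq_sym cross_m0].
have g_neg : forall i, (i < l)%N -> s * cross (natv (w i)) (m i) < 0.
  elim=> [//|i IH] lt_il.
  have [t1 t2] := turn lt_il; have := IH (ltnW lt_il).
  by case: s_sign => ->; nia.
exists s => //; split=> // i lt_il; have [t1 _] := turn lt_il.
by have := g_neg i (ltnW lt_il); case: s_sign => ->; nia.
Qed.

Lemma first_wall_ahead (s : int) (v : nat * nat) :
  s = 1 \/ s = -1 -> (0 < v.1 + v.2)%N -> (2 <= l)%N ->
  (forall i, (i.+1 < l)%N -> 0 < s * cross (natv (w i.+1)) (natv (w i))) ->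
  cross (natv v) (m l) = cross (natv v) (m 0%N) ->
  0 < s * cross (natv v) (natv (w 0%N)).
Proof.
move=> s_sign v_gt0 l_ge2 s_turn m_l_parallel.
rewrite ltNge; apply/negP => behind.
have later_behind i : (0 < i < l)%N -> s * cross (natv v) (natv (w i)) < 0.
  elim: i => [//|i IH] /andP [_ lt_il].
  apply: (quadrant_cross_trans s_sign v_gt0 (s_turn i lt_il)).
  case: i IH lt_il => [|i] IH lt_il; first exact: behind.
  by apply/ltW/IH; rewrite /= ltnW.
pose f i := s * cross (natv v) (m i).
have f_step i : (i < l)%N ->
    f i.+1 = f i + (j i)%:Z * (s * cross (natv v) (natv (w i))).
  by move=> lt_il; rewrite /f m_step // /cross /= !PoszM; ring.
have f_drop i : (i.+2 <= l)%N -> f i.+2 < f 0%N.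
  elim: i => [|i IH] lt_il.
    have := later_behind 1%N lt_il; have := j_gt0 lt_il.
    have := j_gt0 (ltnW lt_il).
    by rewrite !f_step // ?(ltnW lt_il) //; nia.
  have := IH (ltnW lt_il); have := later_behind i.+2 lt_il.
  have := j_gt0 lt_il.
  by rewrite (f_step i.+2) //; nia.
have := f_drop l.-2; rewrite (_ : l.-2.+2 = l); last by lia.
by rewrite /f m_l_parallel ltxx => /(_ (leqnn l)).
Qed.

Lemma first_wall_between (a b k d1 d2 : nat) :
  (0 < a + b)%N -> (2 <= l)%N -> m 0%N = (- d1%:Z, - d2%:Z) ->
  m l = ((k * a)%:Z - d1%:Z, (k * b)%:Z - d2%:Z) ->
  wall_between a b k d1 d2 (w 0%N).
Proof.
move=> ab_gt0 l_ge2 m_0 m_l.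
have [s s_sign [g_neg s_turn]] := turn_orientation.
have := @first_wall_ahead s (a, b) s_sign ab_gt0 l_ge2 s_turn.
rewrite m_l m_0 /cross /= !PoszM => /(_ ltac:(ring)) ahead.
have [] := first_wall_le_total (ltnW l_ge2); rewrite m_l m_0 /= => le1 le2.
have := g_neg 0 (ltnW l_ge2); rewrite m_0 /wall_between /cross /= => g0_neg.
split; [lia | lia | ].
move: ahead g0_neg; case: (w 0%N) => p q /=.
by case: s_sign => ->; nia.
Qed.

End RotatingBends.

Definition intrv {R : pzRingType} (u : int * int) : R * R := (u.1%:~R, u.2%:~R).

Lemma cross_intrv (R : pzRingType) (u v : int * int) :
  cross (intrv u) (intrv v) = (cross u v)%:~R :> R.
Proof. by rewrite /cross /= intrB !intrM. Qed.

Lemma cross_turn (R : realFieldType) (u u' m m' : R * R) (t t' lam J : R) :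
  0 < t -> 0 < t' -> 0 < lam ->
  m' = (m.1 + J * u.1, m.2 + J * u.2) ->
  (t' * u'.1, t' * u'.2) = (t * u.1 + lam * m'.1, t * u.2 + lam * m'.2) ->
  cross u m != 0 ->
  cross u' u * cross u m < 0 /\ cross u' u * cross u' m' < 0.
Proof.
case: u u' m m' => [p q] [p' q'] [x y] [x' y'] /= t_gt0 t'_gt0 lam_gt0.
case=> -> -> [e1 e2]; rewrite /cross /= => g_ne0.
set X := p' * q - q' * p.
have k1 : t' * X = - (lam * (p * y - q * x)).
  have -> : t' * X = (t' * p') * q - (t' * q') * p by rewrite /X; ring.
  by rewrite e1 e2; ring.
have k2 : t * X = - (lam * (p' * (y + J * q) - q' * (x + J * p))).
  have -> : t * X = p' * (t * q) - q' * (t * p) by rewrite /X; ring.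
  have -> : t * p = t' * p' - lam * (x + J * p) by lra.
  have -> : t * q = t' * q' - lam * (y + J * q) by lra.
  ring.
set g := p * y - q * x in g_ne0 k1 *; set g' := p' * (y + J * q) - _ in k2 *.
have g_sq : 0 < g ^+ 2 by rewrite exprn_even_gt0 // g_ne0 orbT.
have Xg_neg : X * g < 0 by nra.
have X_ne0 : X != 0 by apply: contraTneq Xg_neg => ->; rewrite mul0r ltxx.
have X_sq : 0 < X ^+ 2 by rewrite exprn_even_gt0 // X_ne0 orbT.
split=> //; nra.
Qed.

Section BrokenLines.

Variables (K : fieldType) (l1 l2 : nat) (c : RayData K l1 l2).
Local Notation R := Rdefinitions.R.

Variables (m0 : int * int) (Q : R * R) (tau : seq R) (ms : seq (int * int)).
Variables (cs : seq (PS K l1 l2)) (beta : R -> R * R).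
Local Notation m i := (nth (0, 0) ms i).
Local Notation bend i := (beta (nth 0 tau i)).

Definition bend_on_wall i (w : nat * nat) (j : nat) (t : R) : Prop :=
  [/\ (0 < j)%N, m i.+1 = ((m i).1 + (j * w.1)%N%:Z, (m i).2 + (j * w.2)%N%:Z),
      0 < t, bend i = (- (t * w.1%:R), - (t * w.2%:R)) &
      cross (natv w) (m i) != 0].

Hypothesis bl : is_broken_line c m0 Q tau ms cs beta.

Lemma broken_line_bend i : (i < size tau)%N -> ~ on_pos_axis (bend i) ->
  exists (w : nat * nat) (j : nat) (t : R), bend_on_wall i w j t.
Proof.
have [_ [_ tau_neg] [_ beta_ne0] _ bends] := bl.
move=> lt_i off_axes; have [W [_ on_W pair_ne0 [j [j_gt0 m_next _ _]]]] := bends i lt_i.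
exists (wdir W), j; rewrite /bend_on_wall.
have := beta_ne0 _ (ltW (all_nthP 0 tau_neg i lt_i)).
move: on_W off_axes pair_ne0; rewrite absz_gt0; case: (bend i) => x y.
case: W m_next => [| | a b] m_next /=.
- move=> -> off_axes pair_ne0 xy_ne0; exists (- x); split=> //.
  + rewrite oppr_gt0 lt_neqAle; apply/andP; split.
      by apply/eqP => x0; apply: xy_ne0; rewrite x0.
    by rewrite leNgt; apply/negP => x_gt0; apply: off_axes; left.
  + by rewrite mulr1 mulr0 oppr0 opprK.
  + by rewrite /cross /= mul1r mul0r subr0.
- move=> -> off_axes pair_ne0 xy_ne0; exists (- y); split=> //.
  + rewrite oppr_gt0 lt_neqAle; apply/andP; split.
      by apply/eqP => y0; apply: xy_ne0; rewrite y0.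
    by rewrite leNgt; apply/negP => y_gt0; apply: off_axes; right.
  + by rewrite mulr1 mulr0 oppr0 opprK.
  + by rewrite /cross /= mul1r mul0r sub0r oppr_eq0.
- move=> [t [t_ge0 [-> ->]]] _ pair_ne0 xy_ne0; exists t; split=> //.
  + rewrite lt_neqAle t_ge0 andbT; apply/eqP => t0; apply: xy_ne0.
    by rewrite -t0 !mul0r oppr0.
  + by rewrite /cross /= -opprB oppr_eq0.
Qed.

Lemma broken_line_turn i (w w' : nat * nat) (j j' : nat) (t t' : R) :
  (i.+1 < size tau)%N -> bend_on_wall i w j t -> bend_on_wall i.+1 w' j' t' ->
  cross (natv w') (natv w) * cross (natv w) (m i) < 0 /\
  cross (natv w') (natv w) * cross (natv w') (m i.+1) < 0.
Proof.
move=> lt_i1 [_ m_next t_gt0 bend_i g_ne0] [_ _ t'_gt0 bend_i1 _].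
have [_ [tau_sorted tau_neg] _ pieces _] := bl.
have tau_lt : nth 0 tau i < nth 0 tau i.+1.
  by apply: (sorted_ltn_nth lt_trans) => //; rewrite inE ltnW.
have tau_i1_neg : nth 0 tau i.+1 < 0 by apply: (all_nthP 0 tau_neg).
have : bend i.+1 = ((bend i).1 - (nth 0 tau i.+1 - nth 0 tau i) * (m i.+1).1%:~R,
                     (bend i).2 - (nth 0 tau i.+1 - nth 0 tau i) * (m i.+1).2%:~R).
  apply: pieces; first exact: ltnW.
  - by split; [lra | right | right; apply: ltW].
  - by split; [lra | right; apply: ltW | right].
rewrite bend_i bend_i1 => -[e1 e2].
have := @cross_turn R (intrv (natv w)) (intrv (natv w')) (intrv (m i)) (intrv (m i.+1))
  t t' (nth 0 tau i.+1 - nth 0 tau i) j%:R t_gt0 t'_gt0.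
rewrite !cross_intrv -!intrM !ltrz0 intr_eq0 subr_gt0; apply=> //.
- by rewrite m_next /intrv /= !intrD !PoszM !intrM.
- by rewrite /intrv /=; congr (_, _); lra.
Qed.

Lemma broken_line_turning_bends :
  (forall i, (i < size tau)%N -> ~ on_pos_axis (bend i)) ->
  exists (w : nat -> nat * nat) (j : nat -> nat),
  [/\ forall i, (i < size tau)%N -> (0 < j i)%N,
      forall i, (i < size tau)%N ->
        m i.+1 = ((m i).1 + (j i * (w i).1)%N%:Z, (m i).2 + (j i * (w i).2)%N%:Z),
      forall i, (i < size tau)%N -> cross (natv (w i)) (m i) != 0 &
      forall i, (i.+1 < size tau)%N ->
        cross (natv (w i.+1)) (natv (w i)) * cross (natv (w i)) (m i) < 0 /\
        cross (natv (w i.+1)) (natv (w i)) * cross (natv (w i.+1)) (m i.+1) < 0].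
Proof.
move=> off_axes.
have /choice [f f_bend] : forall i, exists x : nat * nat * nat * R,
    (i < size tau)%N -> bend_on_wall i x.1.1 x.1.2 x.2.
  move=> i; case: (ltnP i (size tau)) => [lt_i | _].
    have [w [j [t on_wall]]] := broken_line_bend lt_i (off_axes i lt_i).
    by exists (w, j, t).
  by exists (0%N, 0%N, 0%N, 0).
exists (fun i => (f i).1.1), (fun i => (f i).1.2); split.
- by move=> i /f_bend [].
- by move=> i /f_bend [].
- by move=> i /f_bend [].
- by move=> i lt_i1; apply: broken_line_turn (f_bend i (ltnW lt_i1)) (f_bend i.+1 lt_i1).
Qed.

End BrokenLines.

Lemma one_bending_of_no_wall_between (K : fieldType) (l1 l2 : nat) (c : RayData K l1 l2)
    (a b k d1 d2 : nat) :
  (0 < a + b)%N -> (0 < k)%N -> (forall w, ~ wall_between a b k d1 d2 w) ->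
  one_bending c d1 d2 a b k.
Proof.
move=> ab_gt0 k_gt0 no_wall Q tau ms cs beta bl ms_last off_axes.
have [[size_ms _ ms_0 _] _ _ _ _] := bl.
have ms_l : nth (0, 0) ms (size tau) = ((k * a)%:Z - d1%:Z, (k * b)%:Z - d2%:Z).
  by rewrite -ms_last -nth_last size_ms; apply: set_nth_default; rewrite size_ms.
have [w [j [j_gt0 m_step g_ne0 turn]]] := broken_line_turning_bends bl off_axes.
case: (ltngtP (size tau) 1) => [| l_ge2 | //].
  rewrite ltnS leqn0 => /eqP tau_nil.
  by move: ms_l; rewrite tau_nil ms_0 => -[]; nia.
case: (no_wall (w 0%N)); apply: (first_wall_between j_gt0 m_step) => //.
exact: g_ne0 (ltnW l_ge2).
Qed.

Lemma no_wall_between_kab1 a b k w : ~ wall_between a b k (k * a * b).+1 (k * b ^ 2) w.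
Proof.
case: w => p q [/= le_p le_q]; rewrite /cross /=.
have [vw_lt0 | vw_gt0 | ->] := ltrgtP (a%:Z * q%:Z - b%:Z * p%:Z) 0; last by rewrite mul0r ltxx.
- by rewrite nmulr_rgt0 //; nia.
- by rewrite pmulr_rgt0 //; nia.
Qed.

Lemma no_wall_between_gap a b k d1 d2 w :
  (d1 * b < d2 * a)%N -> ((d2 * a - d1 * b) * k * a <= d1)%N ->
  ~ wall_between a b k d1 d2 w.
Proof.
case: w => p q lt_d gap [/= le_p le_q]; rewrite /cross /=.
have a_gt0 : (0 < a)%N by case: a lt_d {gap le_p} => //; rewrite muln0.
have key : a%:Z * (p%:Z * d2%:Z - q%:Z * d1%:Z) =
    p%:Z * (d2 * a - d1 * b)%N%:Z - d1%:Z * (a%:Z * q%:Z - b%:Z * p%:Z).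
  by rewrite -subzn ?(ltnW lt_d) // !PoszM; ring.
have pg_le : (p * (d2 * a - d1 * b) <= k * a * (d2 * a - d1 * b))%N by rewrite leq_mul2r le_p orbT.
move: (d2 * a - d1 * b)%N gap key pg_le => g gap key pg_le.
have [vw_lt0 | vw_gt0 | ->] := ltrgtP (a%:Z * q%:Z - b%:Z * p%:Z) 0; last by rewrite mul0r ltxx.
- by rewrite nmulr_rgt0 //; nia.
- by rewrite pmulr_rgt0 //; nia.
Qed.

Lemma no_wall_between_dist a b k d1 d2 w :
  (d1 * b != d2 * a)%N ->
  ((d1 * b < d2 * a)%N -> (absz ((d1 * b)%:Z - (d2 * a)%:Z) * k * a <= d1)%N) ->
  ((d2 * a < d1 * b)%N -> (absz ((d1 * b)%:Z - (d2 * a)%:Z) * k * b <= d2)%N) ->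
  ~ wall_between a b k d1 d2 w.
Proof.
move=> d_ne gap_lt gap_gt.
have [lt_d | gt_d | eq_d] := ltngtP (d1 * b) (d2 * a); last by rewrite eq_d eqxx in d_ne.
  by apply: (no_wall_between_gap lt_d); rewrite -(distnEr (ltnW lt_d)) gap_lt.
move/wall_between_swap; apply: (no_wall_between_gap gt_d).
by rewrite -(distnEl (ltnW gt_d)) gap_gt.
Qed.

Lemma exists_large_gap a b m N : coprime a b -> (0 < b)%N ->
  exists d1 d2 : nat, (d1 * b = d2 * a + m)%N /\ (N <= d2)%N.
Proof.
move=> /eqP co_ab b_gt0; have [x _] := Bezoutr a b_gt0; rewrite co_ab => b_dvd.
pose d2 := (m * x + b * N)%N.
have b_dvd_d : (b %| d2 * a + m)%N.
  have -> : (d2 * a + m = m * (1 + x * a) + b * (N * a))%N by rewrite /d2; ring.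
  by apply: dvdn_add; [apply: dvdn_mull | apply: dvdn_mulr].
exists ((d2 * a + m) %/ b)%N, d2; split; first by rewrite divnK.
by rewrite /d2; nia.
Qed.

Theorem corollary5p12 (K : fieldType) (l1 l2 : nat) (c : RayData K l1 l2) :
  [pchar K] =i pred0 -> (0 < l1)%N -> (0 < l2)%N -> is_scat c ->
  forall a b k : nat, coprime a b -> (0 < k)%N ->
  [/\ one_bending c (k * a * b).+1 (k * b ^ 2) a b k /\
      one_bending c (k * a ^ 2) (k * a * b).+1 a b k,
      (forall d1 d2 : nat, (d1 * b != d2 * a)%N ->
         let m := absz ((d1 * b)%:Z - (d2 * a)%:Z) in
         ((d1 * b < d2 * a)%N -> (m * k * a <= d1)%N) ->
         ((d2 * a < d1 * b)%N -> (m * k * b <= d2)%N) ->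
         one_bending c d1 d2 a b k) &
      (forall m : nat, (0 < m)%N -> forall M : nat,
         exists d1 d2 : nat,
           [/\ (M < d1 + d2)%N,
               m = absz ((d1 * b)%:Z - (d2 * a)%:Z) &
               one_bending c d1 d2 a b k])].
Proof.
(* Only the shape of the walls matters, not the consistency of the diagram. *)
move=> _ _ _ _ a b k co_ab k_gt0.
have ab_gt0 : (0 < a + b)%N.
  by move: co_ab; case: a => [|a]; case: b => [|b] //; rewrite /coprime gcdn0.
have ob d1 d2 : (forall w, ~ wall_between a b k d1 d2 w) -> one_bending c d1 d2 a b k :=
  one_bending_of_no_wall_between ab_gt0 k_gt0.
have ob_dist d1 d2 d_ne gap_lt gap_gt :=
  ob d1 d2 (fun w => no_wall_between_dist (w := w) d_ne gap_lt gap_gt).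
split; [split | exact: ob_dist |].
- by apply: ob => w; apply: no_wall_between_kab1.
- apply: ob => w /wall_between_swap; rewrite mulnAC; exact: no_wall_between_kab1.
move=> m m_gt0 M; have [b0 | b_gt0] := posnP b.
  have a1 : a = 1%N by move: co_ab; rewrite b0 /coprime gcdn0 => /eqP.
  subst a b; exists (m * k + M)%N, m.
  by split; [lia | lia | apply: ob_dist => /=; lia].
have [d1 [d2 [d_gap d2_large]]] := exists_large_gap m (m * k * b + M).+1 co_ab b_gt0.
exists d1, d2; rewrite d_gap.
by split; [lia | lia | apply: ob_dist => /=; lia].
Qed.
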